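(* Let $G$ denote the group $\operatorname{Hom}(\mathbb Z^{\mathbb N},\mathbb Z)$ of all group homomorphisms from the Baer–Specker group $\mathbb Z^{\mathbb N}$ to $\mathbb Z$ (which is algebraically isomorphic to $\mathbb Z^{(\mathbb N)}$), equipped with the topology $t_p(\mathbb Z^{\mathbb N})$ of pointwise convergence on $\mathbb Z^{\mathbb N}$ (i.e. the topology inherited from $\mathbb Z^{\mathbb Z^{\mathbb N}}$, $\mathbb Z$ discrete). Then the dual group $\widehat G$ is (topologically) isomorphic to the locally quasi-convex tensor product $\mathbb Z^{\mathbb N}\otimes_{\mathcal Q}\mathbb T$.
   Context: All groups are abelian topological groups; $\mathbb T=\mathbb R/\mathbb Z$ (identified with $(-1/2,1/2]$ with addition mod $1$). A character of a topological group is a continuous homomorphism into $\mathbb T$; the dual group $\widehat G$ is the group of characters with the compact-open topology. $\mathbb Z^{\mathbb N}$ carries the product topology ($\mathbb Z$ discrete). A subset $A$ of a topological group $L$ is quasi-convex if for every $g\in L\setminus A$ there is a character $\chi$ of $L$ with $|\chi(a)|\le 1/4$ for all $a\in A$ and $|\chi(g)|>1/4$; $L$ is locally quasi-convex if $0$ has a neighbourhood basis of quasi-convex sets. $\mathcal Q$ is the class of Hausdorff locally quasi-convex abelian groups. A continuous bihomomorphism $b:G_1\times G_2\to L$ is a map such that $b(\cdot,h)$ and $b(g,\cdot)$ are continuous homomorphisms for all fixed $g,h$, and $b$ is continuous at $(0,0)$. For $G_1,G_2\in\mathcal Q$, the $\mathcal Q$-tensor product $G_1\otimes_{\mathcal Q}G_2$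 is a group in $\mathcal Q$ together with a continuous bihomomorphism $\otimes_{\mathcal Q}:G_1\times G_2\to G_1\otimes_{\mathcal Q}G_2$ such that for every continuous bihomomorphism $b:G_1\times G_2\to B$ with $B\in\mathcal Q$ there is a unique continuous homomorphism $\tilde b:G_1\otimes_{\mathcal Q}G_2\to B$ with $\tilde b\circ\otimes_{\mathcal Q}=b$; it exists and is unique up to topological isomorphism. *)

From HB Require Import structures.
From mathcomp Require Import all_boot all_order all_algebra.
From mathcomp Require Import boolp classical_sets functions.
From mathcomp Require Import reals.
From mathcomp Require Import lra.
Set Implicit Arguments. Unset Strict Implicit. Unset Printing Implicit Defensive.
Import Order.TTheory GRing.Theory Num.Theory.
Local Open Scope classical_set_scope.
Local Open Scope ring_scope.

(* The circle group T = R/Z, realised on the representatives (-1/2,1/2] *)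
Section Torus.
Variable R : realType.

Definition tred (z : R) : R := z + (Num.floor (2^-1 - z))%:~R.

Lemma tred_range z : (- 2^-1 < tred z) && (tred z <= 2^-1).
Proof.
rewrite /tred; have /andP[h1 h2] := Num.Theory.floor_itv (2^-1 - z).
rewrite intrD in h2; apply/andP; split; lra.
Qed.

Lemma tred_shift z (m : int) : tred (z + m%:~R) = tred z.
Proof.
rewrite /tred.
have -> : 2^-1 - (z + m%:~R) = (2^-1 - z) + (- m)%:~R by rewrite intrN; lra.
rewrite Num.Theory.floorDrz ?Num.Theory.intr_int // Num.Theory.intrKfloor intrD intrN.
lra.
Qed.

Lemma tred_id z : (- 2^-1 < z) && (z <= 2^-1) -> tred z = z.
Proof.
move=> /andP[h1 h2]; rewrite /tred.
have -> : Num.floor (2^-1 - z) = 0.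
  by apply: Num.Theory.floor_def; rewrite add0r; apply/andP; split; lra.
by rewrite addr0.
Qed.

Record torus := Torus { tval :> R; tvalP : (- 2^-1 < tval) && (tval <= 2^-1) }.
HB.instance Definition _ := [isSub for tval].
HB.instance Definition _ := [Choice of torus by <:].

Lemma tzero_range : (- 2^-1 < (0:R)) && ((0:R) <= 2^-1).
Proof. by apply/andP; split; lra. Qed.
Definition tzero : torus := Torus tzero_range.
Definition tadd (a b : torus) : torus := Torus (tred_range (tval a + tval b)).
Definition topp (a : torus) : torus := Torus (tred_range (- tval a)).

Lemma tredE z : exists k : int, tred z = z + k%:~R.
Proof. by exists (Num.floor (2^-1 - z)). Qed.

Lemma taddA : associative tadd.
Proof.
move=> a b c; apply: val_inj => /=.
have [k ->] := tredE (tval b + tval c); have [l ->] := tredE (tval a + tval b).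
have -> : tval a + (tval b + tval c + k%:~R) = (tval a + tval b + tval c) + k%:~R.
  by rewrite !addrA.
have -> : tval a + tval b + l%:~R + tval c = (tval a + tval b + tval c) + l%:~R.
  by rewrite addrAC.
by rewrite !tred_shift.
Qed.

Lemma taddC : commutative tadd.
Proof. by move=> a b; apply: val_inj => /=; rewrite addrC. Qed.

Lemma tadd0 : left_id tzero tadd.
Proof. by move=> a; apply: val_inj => /=; rewrite add0r tred_id // tvalP. Qed.

Lemma taddN : left_inverse tzero topp tadd.
Proof.
move=> a; apply: val_inj => /=.
have [k ->] := tredE (- tval a).
rewrite addrAC addNr add0r -[_%:~R]add0r tred_shift tred_id //.
by apply/andP; split; lra.
Qed.

HB.instance Definition _ := GRing.isZmodule.Build torus taddA taddC tadd0 taddN.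

End Torus.

(* Abelian topological groups.  A group is presented as a subgroup     *)
(* [tg_S] of a MathComp zmodType [tg_V] (its carrier), together with a *)
(* family [tg_open] of open subsets of [tg_S] (its topology).  Elements *)
(* of [tg_V] outside [tg_S] play no role.                               *)
Unset Implicit Arguments.

Record tgrp := TGrp {
  tg_V : zmodType;
  tg_S : set tg_V;
  tg_open : set (set tg_V) }.

Arguments tg_S : clear implicits.
Arguments tg_open : clear implicits.

Section TopGroups.
Implicit Types G H L : tgrp.

Definition is_subgroup G :=
  tg_S G 0 /\ forall x y, tg_S G x -> tg_S G y -> tg_S G (x - y).

Definition is_topology G :=
  [/\ (forall U, tg_open G U -> U `<=` tg_S G),
      tg_open G (tg_S G),
      (forall U V, tg_open G U -> tg_open G V -> tg_open G (U `&` V)) &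
      (forall F : set (set (tg_V G)), F `<=` tg_open G ->
         tg_open G (\bigcup_(U in F) U))].

Definition sub_continuous G :=
  forall (x y : tg_V G) W, tg_S G x -> tg_S G y -> tg_open G W -> W (x - y) ->
  exists U V, [/\ tg_open G U, tg_open G V, U x, V y &
                  forall u v, U u -> V v -> W (u - v)].

Definition is_topgroup G := [/\ is_subgroup G, is_topology G & sub_continuous G].

Definition hausdorff G :=
  forall x y : tg_V G, tg_S G x -> tg_S G y -> x <> y ->
  exists U V, [/\ tg_open G U, tg_open G V, U x, V y & U `&` V = set0].

Definition is_hom G H (f : tg_V G -> tg_V H) :=
  (forall x, tg_S G x -> tg_S H (f x)) /\
  (forall x y, tg_S G x -> tg_S G y -> f (x + y) = f x + f y).

Definition is_cont G H (f : tg_V G -> tg_V H) :=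
  forall W, tg_open H W -> tg_open G (tg_S G `&` f @^-1` W).

Definition cont_hom G H (f : tg_V G -> tg_V H) := is_hom G H f /\ is_cont G H f.

Definition top_iso G H :=
  exists (f : tg_V G -> tg_V H) (g : tg_V H -> tg_V G),
  [/\ cont_hom G H f, cont_hom H G g,
      (forall x, tg_S G x -> g (f x) = x) &
      (forall y, tg_S H y -> f (g y) = y)].

Definition cont_bihom G1 G2 L (b : tg_V G1 -> tg_V G2 -> tg_V L) :=
  [/\ (forall g, tg_S G1 g -> cont_hom G2 L (b g)),
      (forall h, tg_S G2 h -> cont_hom G1 L (fun g => b g h)) &
      (forall W, tg_open L W -> W (b 0 0) ->
        exists U V, [/\ tg_open G1 U, tg_open G2 V, U 0, V 0 &
                        forall u v, U u -> V v -> W (b u v)])].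

Definition is_compact G (K : set (tg_V G)) :=
  K `<=` tg_S G /\
  forall F : set (set (tg_V G)), F `<=` tg_open G -> K `<=` \bigcup_(U in F) U ->
  exists (n : nat) (f : nat -> set (tg_V G)),
    (forall i, (i < n)%N -> F (f i)) /\ K `<=` \bigcup_(i in [set i | (i < n)%N]) f i.

End TopGroups.

Section Duality.
Variable R : realType.

Definition tabs (x : torus R) : R := `| tval x |.

Definition torus_open (U : set (torus R)) :=
  forall x, U x -> exists e : R, 0 < e /\ forall y, tabs (y - x) < e -> U y.

Definition TT : tgrp := TGrp (torus R) setT torus_open.

Definition character G (chi : tg_V G -> torus R) := cont_hom G TT chi.

Definition quasi_convex G (A : set (tg_V G)) :=
  A `<=` tg_S G /\
  forall g, tg_S G g -> ~ A g ->
  exists chi, [/\ character G chi,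
                  (forall a, A a -> tabs (chi a) <= 4^-1) &
                  4^-1 < tabs (chi g)].

Definition loc_quasi_convex G :=
  forall U, tg_open G U -> U 0 ->
  exists A, [/\ quasi_convex G A, A `<=` U &
                exists V, [/\ tg_open G V, V 0 & V `<=` A]].

Definition in_Q G := [/\ is_topgroup G, hausdorff G & loc_quasi_convex G].

Definition is_Q_tensor G1 G2 H (t : tg_V G1 -> tg_V G2 -> tg_V H) :=
  [/\ in_Q H, cont_bihom G1 G2 H t &
      forall (B : tgrp) (b : tg_V G1 -> tg_V G2 -> tg_V B),
        in_Q B -> cont_bihom G1 G2 B b ->
        exists bt : tg_V H -> tg_V B,
          [/\ cont_hom H B bt,
              (forall g h, tg_S G1 g -> tg_S G2 h -> bt (t g h) = b g h) &
              forall bt' : tg_V H -> tg_V B, cont_hom H B bt' ->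
                (forall g h, tg_S G1 g -> tg_S G2 h -> bt' (t g h) = b g h) ->
                forall x, tg_S H x -> bt' x = bt x]].

(* the dual group with the compact-open topology; characters are
   normalised to vanish outside the group so that they are determined
   by their values on it *)
Definition dual_S G : set (tg_V G -> torus R) :=
  fun chi => character G chi /\ forall x, ~ tg_S G x -> chi x = 0.

Definition compact_open G (W : set (tg_V G -> torus R)) :=
  W `<=` dual_S G /\
  forall chi, W chi ->
  exists (n : nat) (K : nat -> set (tg_V G)) (U : nat -> set (torus R)),
    (forall i, (i < n)%N -> [/\ is_compact G (K i), torus_open (U i) & chi @` K i `<=` U i]) /\
    (forall psi, dual_S G psi -> (forall i, (i < n)%N -> psi @` K i `<=` U i) -> W psi).

Definition dual G : tgrp := TGrp (tg_V G -> torus R) (dual_S G) (compact_open G).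

End Duality.

Definition ZN_open (W : set (nat -> int)) :=
  forall f, W f -> exists n : nat, forall g, (forall i, (i < n)%N -> g i = f i) -> W g.

Definition ZN : tgrp := TGrp (nat -> int) setT ZN_open.

Definition hom_ZN_Z : set ((nat -> int) -> int) :=
  fun phi => forall x y, phi (x + y) = phi x + phi y.

Definition pointwise_open (W : set ((nat -> int) -> int)) :=
  W `<=` hom_ZN_Z /\
  forall phi, W phi -> exists (n : nat) (xs : nat -> (nat -> int)),
    forall psi, hom_ZN_Z psi -> (forall i, (i < n)%N -> psi (xs i) = phi (xs i)) -> W psi.

Definition HomZN : tgrp := TGrp ((nat -> int) -> int) hom_ZN_Z pointwise_open.

From Pilot Require Import Defs.
From HB Require Import structures.
From mathcomp Require Import all_boot all_order all_algebra.
From mathcomp Require Import boolp classical_sets functions reals.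
From mathcomp Require Import ring lra zify.
From Stdlib Require List.
Import Order.TTheory GRing.Theory Num.Theory.
Set Implicit Arguments. Unset Strict Implicit. Unset Printing Implicit Defensive.
Local Open Scope ring_scope.
Local Open Scope classical_set_scope.
Local Notation tval := Defs.tval.

(* A finite tensor [sum x_i (x) z_i] of [Z^N] and [T] acts on
   [G = Hom(Z^N, Z)] by [phi |-> sum z_i *~ phi x_i], and every character of
   [G] is of this form: continuity makes it vanish on the homomorphisms killing
   finitely many points [x_i], and the divisibility of [T] peels off one [x_i]
   at a time.  By Specker's diagonal argument the compact subsets of [G] are
   finite, so the dual carries the topology of pointwise convergence on [G];
   with it the dual lies in [Q] and [(x, z) |-> x (x) z] is a continuous
   bihomomorphism.  Conversely, for a [Q]-tensor product [(H, t)], every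
   character of [H] is [t x z |-> z *~ k x] for some [k] in [G], because the
   continuous endomorphisms of [T] are the multiplications by integers.  As
   characters separate the points of [H], [sum x_i (x) z_i |-> sum t x_i z_i]
   is a well-defined homomorphism from the dual to [H]; local quasi-convexity
   of [H] makes it continuous, and it inverts the map given by the universal
   property. *)

Section TorusArithmetic.
Variable R : realType.
Notation T := (torus R).

Lemma tvalD (a b : T) : tval (a + b) = tred (tval a + tval b). Proof. by []. Qed.
Lemma tvalN (a : T) : tval (- a) = tred (- tval a). Proof. by []. Qed.

Lemma tred_tval (a : T) : tred (tval a) = tval a.
Proof. exact: tred_id (tvalP a). Qed.

Lemma tredDl (z w : R) : tred (tred z + w) = tred (z + w).
Proof. by have [k ->] := tredE z; rewrite addrAC tred_shift. Qed.

Lemma tredDr (z w : R) : tred (z + tred w) = tred (z + w).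
Proof. by rewrite addrC tredDl addrC. Qed.

Lemma tredN (z : R) : tred (- tred z) = tred (- z).
Proof. by have [k ->] := tredE z; rewrite opprD -intrN tred_shift. Qed.

Lemma tredMzr (k : int) (z : R) : tred (k%:~R * tred z) = tred (k%:~R * z).
Proof. by have [m ->] := tredE z; rewrite mulrDr -intrM tred_shift. Qed.

Lemma tred0 : tred (0 : R) = 0.
Proof. by rewrite tred_id //; apply/andP; split; lra. Qed.

Lemma tred_int (m : int) : tred (m%:~R : R) = 0.
Proof. by rewrite -[(m%:~R : R)]add0r tred_shift tred0. Qed.

Lemma tvalMn (a : T) n : tval (a *+ n) = tred (n%:R * tval a).
Proof.
elim: n => [|n IH]; first by rewrite mulr0n mul0r tred0.
by rewrite mulrS tvalD IH tredDr -addn1 natrD mulrDl mul1r addrC.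
Qed.

Lemma tvalMz (a : T) (k : int) : tval (a *~ k) = tred (k%:~R * tval a).
Proof.
case: k => n; first by rewrite /= tvalMn.
rewrite NegzE mulrNz tvalN intrN mulNr -[a *~ _]/(a *+ n.+1).
by rewrite tvalMn tredN.
Qed.

Lemma norm_int_ge1 (k : int) : k != 0 -> 1 <= `|k%:~R : R|.
Proof. by move=> k0; rewrite -intr_norm ler1z; case: k k0 => [[|n]|n]. Qed.

Lemma tred_eq_or_far (z : R) : tred z = z \/ 1 <= `|tred z - z|.
Proof.
have [k ->] := tredE z; rewrite addrAC subrr add0r.
have [->|k0] := eqVneq k 0; first by left; rewrite addr0.
by right; apply: norm_int_ge1.
Qed.

Lemma norm_tred_le (z : R) : `|tred z| <= `|z|.
Proof.
have [-> //|far] := tred_eq_or_far z.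
have /andP[h1 h2] := tred_range z.
have : `|tred z - z| <= `|tred z| + `|z| by apply: ler_normB.
have : `|tred z| <= 2^-1 by rewrite ler_norml; apply/andP; split; lra.
lra.
Qed.

Lemma tred_id_small (z : R) : `|z| + `|tred z| < 1 -> tred z = z.
Proof.
have [-> //|far] := tred_eq_or_far z.
have : `|tred z - z| <= `|tred z| + `|z| by apply: ler_normB.
lra.
Qed.

Definition torus_of (r : R) : T := Torus (tred_range r).

Lemma tval_torus_of (r : R) : tval (torus_of r) = tred r. Proof. by []. Qed.

Lemma tval_torus_of_id (r : R) : - 2^-1 < r -> r <= 2^-1 -> tval (torus_of r) = r.
Proof. by move=> h1 h2; rewrite tval_torus_of tred_id //; apply/andP. Qed.

Lemma tabs_ge0 (a : T) : 0 <= tabs R a. Proof. exact: normr_ge0. Qed.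

Lemma tabs0 : tabs R (0 : T) = 0. Proof. exact: normr0. Qed.

Lemma tabs_eq0 (a : T) : tabs R a = 0 -> a = 0.
Proof. by move=> /normr0_eq0 h; apply: val_inj. Qed.

Lemma tabsD (a b : T) : tabs R (a + b) <= tabs R a + tabs R b.
Proof. by rewrite /tabs tvalD; apply: le_trans (norm_tred_le _) _; apply: ler_normD. Qed.

Lemma tabsN (a : T) : tabs R (- a) = tabs R a.
Proof.
have le_opp (b : T) : tabs R (- b) <= tabs R b.
  by rewrite /tabs tvalN; apply: le_trans (norm_tred_le _) _; rewrite normrN.
apply/eqP; rewrite eq_le; apply/andP; split; first exact: le_opp.
by rewrite -{1}(opprK a); apply: le_opp.
Qed.

Lemma tabsB (a b : T) : tabs R (a - b) = tabs R (b - a).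
Proof. by rewrite -tabsN opprB. Qed.

Lemma tabsBB (a b c : T) : tabs R (a - c) <= tabs R (a - b) + tabs R (b - c).
Proof. by rewrite (_ : a - c = (a - b) + (b - c)) ?tabsD // addrA subrK. Qed.

Lemma tabsMz (a : T) (k : int) : tabs R (a *~ k) <= `|k%:~R : R| * tabs R a.
Proof. by rewrite /tabs tvalMz; apply: le_trans (norm_tred_le _) _; rewrite normrM. Qed.

Lemma exists_nat_gt (x : R) : exists n : nat, x < n%:R.
Proof.
exists (Num.Def.archi_bound `|x|); apply: le_lt_trans (ler_norm x) _.
exact: archi_boundP.
Qed.

(* As long as the multiples [w *+ l] stay in [-1/4, 1/4], no reduction mod 1
   occurs, so they are the real multiples [l * tval w]. *)
Lemma muln_tabs_le (w : T) (m : nat) : (0 < m)%N ->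
  (forall l, (0 < l)%N -> (l <= m)%N -> tabs R (w *+ l) <= 4^-1) ->
  m%:R * tabs R w <= 4^-1.
Proof.
move=> m0 small.
have w_small : `|tval w| <= 4^-1 by have := small 1%N isT m0; rewrite mulr1n.
have real_mult l : (l <= m)%N -> tval (w *+ l) = l%:R * tval w.
  elim: l => [|l IH] hl; first by rewrite mulr0n mul0r.
  have IH' := IH (ltnW hl).
  have l_small : `|l%:R * tval w| <= 4^-1.
    have [-> | l_pos] := posnP l; first by rewrite mul0r normr0; lra.
    by rewrite -IH'; apply: small => //; apply: ltnW.
  have := small l.+1 isT hl.
  rewrite /tabs tvalMn -addn1 natrD mulrDl mul1r => lS_small.
  have normD := ler_normD (l%:R * tval w) (tval w).
  by rewrite tred_id_small //; lra.
by rewrite /tabs -normr_nat -normrM -real_mult // -/(tabs R _); apply: small.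
Qed.

Lemma torus_no_small_subgroup (w : T) :
  (forall n : nat, tabs R (w *+ n) <= 4^-1) -> w = 0.
Proof.
move=> small; apply: tabs_eq0; apply/eqP; rewrite eq_le tabs_ge0 andbT leNgt.
apply/negP => w_pos.
have [n hn] := exists_nat_gt (tabs R w)^-1.
have := muln_tabs_le (m := n.+1) isT (fun l _ _ => small l).
have : (tabs R w)^-1 * tabs R w = 1 by rewrite mulVf ?lt0r_neq0.
rewrite -addn1 natrD mulrDl mul1r; nra.
Qed.

Lemma torus_divisible (y : T) (d : int) : d != 0 -> exists w : T, w *~ d = y.
Proof.
move=> d0; exists (torus_of (tval y / d%:~R)); apply: val_inj => /=.
rewrite tvalMz tval_torus_of tredMzr mulrC -mulrA mulVf ?mulr1 ?tred_tval //.
by rewrite intr_eq0.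
Qed.

Lemma mulz_half_point (a : int) : a != 0 ->
  let w := torus_of (2^-1 / `|a%:~R|) in
  tabs R w = 2^-1 / `|a%:~R| /\ tabs R (w *~ a) = 2^-1.
Proof.
move=> a0 w.
have a_ge1 : 1 <= `|a%:~R : R| := norm_int_ge1 a0.
have w_pos : 0 < 2^-1 / `|a%:~R : R| by apply: divr_gt0; lra.
have w_le : 2^-1 / `|a%:~R : R| <= 2^-1 by rewrite ler_pdivrMr; [nra | lra].
have tw : tval w = 2^-1 / `|a%:~R| by apply: tval_torus_of_id; lra.
split; first by rewrite /tabs tw ger0_norm //; lra.
have az : (a%:~R : R) != 0 by rewrite intr_eq0.
rewrite /tabs tvalMz tw.
have [apos|aneg] := ltP 0 a.
  have -> : a%:~R * (2^-1 / `|a%:~R|) = 2^-1 :> R.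
    by rewrite gtr0_norm ?ltr0z //; field.
  rewrite tred_id; first by rewrite ger0_norm //; lra.
  by apply/andP; split; lra.
have -> : a%:~R * (2^-1 / `|a%:~R|) = 2^-1 + (-1)%:~R :> R.
  by rewrite ltr0_norm ?ltrz0 ?lt_neqAle ?a0 // intrN; field.
rewrite tred_shift tred_id; first by rewrite ger0_norm //; lra.
by apply/andP; split; lra.
Qed.

Lemma mulz_torus_inj (a b : int) : (forall z : T, z *~ a = z *~ b) -> a = b.
Proof.
move=> eq_ab; apply/eqP; rewrite -subr_eq0; apply/negP => /negP ab0.
have [_ half] := mulz_half_point ab0.
by move: half; rewrite mulrzBr eq_ab subrr tabs0; lra.
Qed.

Lemma norm_int_le_of_mulz_small (a : int) (d : R) : 0 < d ->
  (forall z : T, tabs R z < d -> tabs R (z *~ a) <= 4^-1) -> `|a%:~R : R| * d <= 2^-1.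
Proof.
move=> d0 small; have [->|a0] := eqVneq a 0; first by rewrite normr0 mul0r; lra.
rewrite leNgt; apply/negP => hlt.
have [h1 h2] := mulz_half_point a0.
have a_pos : 0 < `|a%:~R : R| by rewrite normr_gt0 intr_eq0.
have : tabs R (torus_of (2^-1 / `|a%:~R|)) < d by rewrite h1 ltr_pdivrMr // mulrC.
by move/small; rewrite h2; lra.
Qed.

Lemma int_eq0_of_bounded_multiples (a : int) (d : R) : 0 < d ->
  (forall m : nat, `|(a * m%:Z)%:~R : R| * d <= 2^-1) -> a = 0.
Proof.
move=> d0 bounded; apply/eqP/negP => /negP a0.
have a_ge1 : 1 <= `|a%:~R : R| := norm_int_ge1 a0.
have [n hn] := exists_nat_gt d^-1.
have nd : 1 < n%:R * d by rewrite -[X in X < _](mulVf (lt0r_neq0 d0)) (ltr_pM2r d0).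
have := bounded n; rewrite intrM normrM -mulrA (_ : (n%:Z)%:~R = n%:R :> R) // normr_nat.
nra.
Qed.

End TorusArithmetic.

Section SubgroupHom.
Variables (G H : tgrp) (f : tg_V G -> tg_V H).
Hypotheses (subG : is_subgroup G) (hom_f : is_hom G H f).

Lemma subgroup0 : tg_S G 0. Proof. by case: subG. Qed.

Lemma subgroupB x y : tg_S G x -> tg_S G y -> tg_S G (x - y).
Proof. by case: subG => _; apply. Qed.

Lemma subgroupN x : tg_S G x -> tg_S G (- x).
Proof. by move=> Gx; rewrite -sub0r; apply: subgroupB => //; apply: subgroup0. Qed.

Lemma subgroupD x y : tg_S G x -> tg_S G y -> tg_S G (x + y).
Proof. by move=> Gx Gy; rewrite -(opprK y); apply: subgroupB => //; apply: subgroupN. Qed.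

Lemma subgroupMn x n : tg_S G x -> tg_S G (x *+ n).
Proof.
move=> Gx; elim: n => [|n IH]; first by rewrite mulr0n; apply: subgroup0.
by rewrite mulrS; apply: subgroupD.
Qed.

Lemma subgroupMz x (k : int) : tg_S G x -> tg_S G (x *~ k).
Proof.
move=> Gx; case: k => n; first exact: subgroupMn.
by rewrite NegzE mulrNz; apply/subgroupN/subgroupMn.
Qed.

Lemma subgroup_sum I (s : seq I) (F : I -> tg_V G) :
  (forall i, tg_S G (F i)) -> tg_S G (\sum_(i <- s) F i).
Proof.
move=> GF; elim: s => [|i s IH]; first by rewrite big_nil; apply: subgroup0.
by rewrite big_cons; apply: subgroupD.
Qed.

Lemma homD x y : tg_S G x -> tg_S G y -> f (x + y) = f x + f y.
Proof. by case: hom_f => _; apply. Qed.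

Lemma hom0 : f 0 = 0.
Proof.
have G0 := subgroup0.
by apply: (addrI (f 0)); rewrite -homD // !addr0.
Qed.

Lemma homN x : tg_S G x -> f (- x) = - f x.
Proof.
move=> Gx; apply/eqP; rewrite -addr_eq0 addrC -homD ?subrr ?hom0 //.
exact: subgroupN.
Qed.

Lemma homB x y : tg_S G x -> tg_S G y -> f (x - y) = f x - f y.
Proof. by move=> Gx Gy; rewrite homD ?homN //; apply: subgroupN. Qed.

Lemma homMn x n : tg_S G x -> f (x *+ n) = f x *+ n.
Proof.
move=> Gx; elim: n => [|n IH]; first by rewrite !mulr0n hom0.
by rewrite !mulrS homD ?IH //; apply: subgroupMn.
Qed.

Lemma homMz x (k : int) : tg_S G x -> f (x *~ k) = f x *~ k.
Proof.
move=> Gx; case: k => n; first exact: homMn.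
by rewrite NegzE !mulrNz homN ?homMn //; apply: subgroupMn.
Qed.

Lemma hom_sum I (s : seq I) (F : I -> tg_V G) : (forall i, tg_S G (F i)) ->
  f (\sum_(i <- s) F i) = \sum_(i <- s) f (F i).
Proof.
move=> GF; elim: s => [|i s IH]; first by rewrite !big_nil hom0.
by rewrite !big_cons homD ?IH //; apply: subgroup_sum.
Qed.

End SubgroupHom.

Lemma cont_hom_comp (G H L : tgrp) (f : tg_V G -> tg_V H) (g : tg_V H -> tg_V L) :
  cont_hom G H f -> cont_hom H L g -> cont_hom G L (g \o f).
Proof.
move=> [[fS fD] f_cont] [[gS gD] g_cont]; split; first split.
- by move=> x Gx; apply/gS/fS.
- by move=> x y Gx Gy /=; rewrite fD // gD //; apply: fS.
move=> W oW.
have -> : tg_S G `&` (g \o f) @^-1` W = tg_S G `&` f @^-1` (tg_S H `&` g @^-1` W).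
  apply/seteqP; split => x /= [Gx Wx]; last by case: Wx.
  by split => //; split => //; apply: fS.
exact/f_cont/g_cont.
Qed.

Lemma cont_hom_id (H : tgrp) : is_topology H -> cont_hom H H id.
Proof.
move=> [open_sub _ _ _]; split; first by split.
move=> W oW; suff -> : tg_S H `&` id @^-1` W = W by [].
by apply/seteqP; split => x /= => [[]//|Wx]; split => //; apply: open_sub oW _ Wx.
Qed.

(* Seen as a subgroup of itself, a zmodType inherits the lemmas above for
   additive maps; its topology is irrelevant. *)
Definition total_tgrp (M : zmodType) : tgrp := TGrp M setT set0.

Section Additive.
Variables (M N : zmodType) (f : M -> N).
Hypothesis fD : {morph f : x y / x + y}.

Let hom_f : is_hom (total_tgrp M) (total_tgrp N) f.
Proof. by split => // x y _ _; apply: fD. Qed.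
Let subM : is_subgroup (total_tgrp M). Proof. by []. Qed.

Lemma additive0 : f 0 = 0. Proof. exact: hom0 subM hom_f. Qed.
Lemma additiveB x y : f (x - y) = f x - f y. Proof. by rewrite (homB subM hom_f). Qed.
Lemma additiveMn x n : f (x *+ n) = f x *+ n. Proof. by rewrite (homMn subM hom_f). Qed.
Lemma additiveMz x (k : int) : f (x *~ k) = f x *~ k. Proof. by rewrite (homMz subM hom_f). Qed.

End Additive.

Lemma fctMz (A : Type) (M : zmodType) (f : A -> M) (k : int) x : (f *~ k) x = f x *~ k.
Proof. exact: (additiveMz (f := fun g : A -> M => g x) (fun _ _ => erefl)). Qed.

Section TorusEndomorphisms.
Variable R : realType.
Notation T := (torus R).

Definition tball (c : T) (r : R) : set T := [set z | tabs R (z - c) < r].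

Lemma tball_open c r : torus_open R (tball c r).
Proof.
move=> x hx; exists (r - tabs R (x - c)); split; first by rewrite subr_gt0.
by move=> y hy; rewrite /tball /=; have := tabsBB y x c; lra.
Qed.

Lemma tball_center c r : 0 < r -> tball c r c.
Proof. by rewrite /tball /= subrr tabs0. Qed.

Lemma additive_small_eq0 (f : T -> T) : {morph f : x y / x + y} ->
  (forall x, tabs R (f x) <= 4^-1) -> f =1 0.
Proof.
move=> fD small x; apply: torus_no_small_subgroup => n.
by rewrite -additiveMn.
Qed.

Lemma torus_grid (N : nat) (x : T) : (2 <= N)%N ->
  exists (r : T) (j : int),
    x = r + torus_of N%:R^-1 *~ j /\ 0 <= tval r /\ tval r < N%:R^-1.
Proof.
move=> N_ge2.
have N_pos : (0 : R) < N%:R by rewrite ltr0n; case: N N_ge2.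
have NV_le : (N%:R^-1 : R) <= 2^-1.
  by rewrite lef_pV2 ?posrE // ?ler_nat //; lra.
have NV_pos : (0 : R) < N%:R^-1 by rewrite invr_gt0.
pose j := Num.floor (N%:R * tval x).
have /andP[j_le j_gt] := floor_itv (N%:R * tval x); rewrite -/j intrD in j_le j_gt.
pose rho := tval x - j%:~R / N%:R.
have rho_ge0 : 0 <= rho by rewrite subr_ge0 ler_pdivrMr // mulrC.
have rho_lt : rho < N%:R^-1.
  rewrite /rho ltrBlDl -[X in _ < _ + X]mul1r -mulrDl ltr_pdivlMr //; lra.
have trho : tval (torus_of rho) = rho by apply: tval_torus_of_id; lra.
exists (torus_of rho), j; split; last by rewrite trho.
apply: val_inj; change (tval x = tval (torus_of rho + torus_of N%:R^-1 *~ j)).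
rewrite tvalD tvalMz trho (tval_torus_of_id (r := N%:R^-1)); try lra.
by rewrite tredDr subrK tred_tval.
Qed.

Lemma torus_cont_hom_small (psi : T -> T) (r : R) :
  cont_hom (TT R) (TT R) psi -> 0 < r ->
  exists e : R, 0 < e /\ forall y, tabs R y < e -> tabs R (psi y) < r.
Proof.
move=> [psi_hom psi_cont] r_pos.
have [|e [e_pos psi_e]] := psi_cont _ (@tball_open 0 r) 0.
  by split => //; rewrite /tball /= (hom0 _ psi_hom) // subr0 tabs0.
exists e; split => // y; rewrite -(subr0 y) => /psi_e [_].
by rewrite /preimage /tball /= !subr0.
Qed.

Lemma torus_torsion_int (a : T) (N : nat) : a *+ N = 0 ->
  exists k : int, k%:~R = N%:R * tval a.
Proof.
move=> aN; have [m Nm] := tredE (N%:R * tval a); exists (- m).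
by rewrite intrN; apply/eqP; rewrite eq_sym -addr_eq0 -Nm -tvalMn aN.
Qed.

(* Continuity at 0 bounds [psi] on a small arc; on the subgroup generated by
   [u = 1/N] the map [psi] agrees with [z *~ k], and [psi - ( *~ k)] then has
   values in [-1/4, 1/4], so it vanishes. *)
Lemma torus_cont_endo_mulz (psi : T -> T) : cont_hom (TT R) (TT R) psi ->
  exists k : int, forall z, psi z = z *~ k.
Proof.
move=> psi_cont; have psiD : {morph psi : x y / x + y}.
  by move=> x y; rewrite (homD psi_cont.1).
have [|e [e_pos psi_small]] := torus_cont_hom_small psi_cont (_ : 0 < 8^-1); first lra.
have [n hn] := exists_nat_gt e^-1; pose N := n.+2.
have N_pos : (0 : R) < N%:R by rewrite ltr0n.
have NV_pos : (0 : R) < N%:R^-1 by rewrite invr_gt0.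
have NV_le : (N%:R^-1 : R) <= 2^-1 by rewrite lef_pV2 ?posrE // ?ler_nat //; lra.
have NV_lt : N%:R^-1 < e.
  rewrite invf_plt ?posrE //; apply: lt_le_trans hn _; rewrite ler_nat.
  exact: leq_trans (leqnSn n) (leqnSn _).
pose u : T := torus_of N%:R^-1.
have tu : tval u = N%:R^-1 by apply: tval_torus_of_id; lra.
pose a := psi u.
have a_small : tabs R a < 8^-1 by apply: psi_small; rewrite /tabs tu ger0_norm //; lra.
have uN : u *+ N = 0.
  apply: val_inj; change (tval (u *+ N) = 0).
  by rewrite tvalMn tu mulfV ?lt0r_neq0 //; exact: (tred_int R 1).
have aN : a *+ N = 0 by rewrite -additiveMn // uN additive0.
have [k Nk] := torus_torsion_int aN.
exists k; pose phi x := psi x - x *~ k.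
have phiD : {morph phi : x y / x + y}.
  by move=> x y; rewrite /phi psiD mulrzDl opprD addrACA.
have phi_u : phi u = 0.
  rewrite /phi (_ : u *~ k = a) ?subrr //; apply: val_inj.
  change (tval (u *~ k) = tval a).
  by rewrite tvalMz tu Nk mulrC mulrA mulVf ?lt0r_neq0 // mul1r tred_tval.
have phi_small x : tabs R (phi x) <= 4^-1.
  have [r [j [-> [r_ge0 r_lt]]]] := torus_grid x (isT : (2 <= N)%N).
  rewrite phiD additiveMz // phi_u mul0rz addr0.
  have psi_r : tabs R (psi r) < 8^-1 by apply: psi_small; rewrite /tabs ger0_norm //; lra.
  have rk : tabs R (r *~ k) <= tabs R a.
    apply: le_trans (tabsMz r k) _; rewrite /tabs (ger0_norm r_ge0) Nk normrM normr_nat.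
    have : N%:R * tval r <= 1.
      by rewrite -[X in _ <= X](mulfV (lt0r_neq0 N_pos)) ler_pM2l //; exact: ltW.
    have := normr_ge0 (tval a); nra.
  have := tabsD (psi r) (- (r *~ k)); rewrite tabsN; lra.
by move=> z; apply/eqP; rewrite -subr_eq0; apply/eqP; exact: (additive_small_eq0 phiD phi_small z).
Qed.

End TorusEndomorphisms.

Notation zseq := (nat -> int).
Notation zfun := (zseq -> int).

Lemma HomZN_subgroup : is_subgroup HomZN.
Proof.
split=> [x y|f g f_hom g_hom x y]; first by rewrite addr0.
change (f (x + y) - g (x + y) = (f x - g x) + (f y - g y)).
by rewrite f_hom g_hom opprD addrACA.
Qed.

Lemma int_subgroup_cyclic (A : set int) :
  A 0 -> (forall a b, A a -> A b -> A (a - b)) ->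
  exists2 d, A d & forall a, A a -> (d %| a)%Z.
Proof.
move=> A0 AB; have subA : is_subgroup (TGrp int A set0) by [].
have [[a [Aa a0]] | all0] := pselect (exists a, A a /\ a != 0); last first.
  exists 0 => // b Ab; rewrite dvd0z; apply/eqP; apply: contrapT => b0.
  by apply: all0; exists b; split => //; apply/eqP.
pose P m := (0 < m)%N && `[< A m%:Z >].
have exP : exists m, P m.
  exists `|a|%N; rewrite /P absz_gt0 a0; apply/asboolP.
  have [a_ge0|a_lt0] := leP 0 a; first by rewrite gez0_abs.
  by rewrite ltz0_abs //; apply: (subgroupN subA).
case: (ex_minnP exP) => d /andP[d_pos /asboolP Ad] d_min.
exists d%:Z => // b Ab; apply/dvdz_mod0P/eqP/negP => /negP r0.
have d0 : d%:Z != 0 by rewrite eqz_nat -lt0n.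
have Ar : A (b %% d%:Z)%Z.
  rewrite (_ : (b %% d%:Z)%Z = b - d%:Z *~ (b %/ d%:Z)%Z).
    by apply: AB => //; apply: (subgroupMz subA).
  by rewrite {2}(divz_eq b d%:Z) mulrzz mulrC addrAC subrr add0r.
have r_ge0 := modz_ge0 b d0.
have : P `|(b %% d%:Z)%Z|%N by rewrite /P absz_gt0 r0 gez0_abs //; apply/asboolP.
move/d_min; rewrite leqNgt => /negP; apply.
by rewrite -ltz_nat gez0_abs // ltz_pmod.
Qed.

Definition vanishes_on (xs : seq zseq) (psi : zfun) :=
  hom_ZN_Z psi /\ forall x, List.In x xs -> psi x = 0.

Lemma vanishes_onB xs psi1 psi2 :
  vanishes_on xs psi1 -> vanishes_on xs psi2 -> vanishes_on xs (psi1 - psi2).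
Proof.
move=> [h1 v1] [h2 v2]; split; first exact: (subgroupB HomZN_subgroup h1 h2).
by move=> y y_in; change (psi1 y - psi2 y = 0); rewrite v1 // v2 // subrr.
Qed.

Lemma vanishes_onMz xs psi (q : int) : vanishes_on xs psi -> vanishes_on xs (psi *~ q).
Proof.
move=> [h v]; split; first exact: (subgroupMz HomZN_subgroup q h).
by move=> y y_in; rewrite fctMz v // mul0rz.
Qed.

Lemma vanishes_on_values_cyclic xs x : exists2 d,
  (exists2 ps, vanishes_on xs ps & ps x = d) &
  forall psi, vanishes_on xs psi -> (d %| psi x)%Z.
Proof.
pose A := [set psi x | psi in vanishes_on xs].
have A0 : A 0 by exists 0 => //; split => //; exact: (subgroup0 HomZN_subgroup).
have AB a b : A a -> A b -> A (a - b).
  by move=> [p1 V1 <-] [p2 V2 <-]; exists (p1 - p2); first exact: vanishes_onB.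
have [_ [ps Vps <-] dvd] := int_subgroup_cyclic A0 AB.
by exists (ps x); [exists ps | move=> psi Vpsi; apply: dvd; exists psi].
Qed.

(* A sequence of pairs [(x, z)] encodes the formal tensor [sum x (x) z] of
   [Z^N (x) T]; it acts on [G = Hom(Z^N, Z)] by [phi |-> sum z *~ phi x]. *)
Definition tensor_eval (R : realType) (s : seq (zseq * torus R)) (phi : zfun) : torus R :=
  \sum_(p <- s) p.2 *~ phi p.1.

Definition tensor_char (R : realType) (s : seq (zseq * torus R)) : zfun -> torus R :=
  fun phi => if pselect (hom_ZN_Z phi) then tensor_eval s phi else 0.

Section Characters.
Variable R : realType.
Notation T := (torus R).
Implicit Types (s : seq (zseq * T)) (chi : zfun -> T).

Lemma character_zero_set chi : character R HomZN chi ->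
  exists xs : seq zseq, forall psi, vanishes_on xs psi -> chi psi = 0.
Proof.
move=> [chi_hom chi_cont].
have chi0 : chi 0 = 0 := hom0 HomZN_subgroup chi_hom.
have [|n [xs near0]] := (chi_cont _ (@tball_open R 0 4^-1)).2 0.
  split; first exact: (subgroup0 HomZN_subgroup).
  by rewrite /preimage /= chi0; apply: tball_center; lra.
exists (List.map xs (List.seq 0 n)) => psi [psi_hom psi0].
apply: torus_no_small_subgroup => m; rewrite -(homMn HomZN_subgroup chi_hom) //.
have [psim_hom] : (tg_S HomZN `&` chi @^-1` tball 0 4^-1) (psi *+ m).
  apply: (near0 _ (subgroupMn HomZN_subgroup m psi_hom)).
  move=> i i_lt; rewrite natmulfctE psi0 ?mul0rn //.
  by apply: List.in_map; apply/List.in_seq; lia.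
by rewrite /preimage /tball /= subr0 => /ltW.
Qed.

(* Induction on [xs]: the values at [x] of the [psi] vanishing on [xs] form a
   subgroup [d Z] of [Z], attained at some [ps]; dividing [chi ps] by [d] in
   [T] peels off the term [x (x) w]. *)
Lemma hom_tensor_eval_of_zero_set (xs : seq zseq) chi : is_hom HomZN (TT R) chi ->
  (forall psi, vanishes_on xs psi -> chi psi = 0) ->
  exists s, forall phi, hom_ZN_Z phi -> chi phi = tensor_eval s phi.
Proof.
elim: xs chi => [|x xs IH] chi chi_hom chi_xs.
  by exists [::] => phi phi_hom; rewrite chi_xs // /tensor_eval big_nil.
have [d [ps Vps ps_d] d_dvd] := vanishes_on_values_cyclic xs x.
have [w w_d] : exists w : T, w *~ d = chi ps.
  have [d0|d0] := eqVneq d 0; last exact: torus_divisible.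
  exists 0; rewrite mul0rz chi_xs //; split; first by case: Vps.
  by move=> y [<-|y_in]; [rewrite ps_d | case: Vps => _; apply].
pose chi' phi := chi phi - w *~ phi x.
have chi'_hom : is_hom HomZN (TT R) chi'.
  split=> // f g f_hom g_hom.
  by rewrite /chi' (homD chi_hom) //= mulrzDr opprD addrACA.
have [s chi's] : exists s, forall phi, hom_ZN_Z phi -> chi' phi = tensor_eval s phi.
  apply: IH => // psi Vpsi.
  set q := (psi x %/ d)%Z; have psi_x : psi x = q * d by rewrite divzK ?d_dvd.
  have Vq := vanishes_onB Vpsi (vanishes_onMz q Vps).
  have : chi (psi - ps *~ q) = 0.
    apply: chi_xs; split; first by case: Vq.
    move=> y [<-|y_in]; last by case: Vq => _; apply.
    by change (psi x - (ps *~ q) x = 0); rewrite fctMz ps_d psi_x mulrzz mulrC subrr.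
  rewrite (homB HomZN_subgroup chi_hom) //; [|by case: Vpsi|by case: (vanishes_onMz q Vps)].
  rewrite (homMz HomZN_subgroup chi_hom) //; last by case: Vps.
  move/eqP; rewrite subr_eq0 => /eqP chi_psi.
  by rewrite /chi' chi_psi -w_d -mulrzA psi_x mulrC subrr.
exists ((x, w) :: s) => phi phi_hom.
by rewrite /tensor_eval big_cons -/(tensor_eval s phi) -chi's // /chi' addrC subrK.
Qed.

Lemma character_tensor_eval chi : character R HomZN chi ->
  exists s, forall phi, hom_ZN_Z phi -> chi phi = tensor_eval s phi.
Proof.
move=> chi_char; have [xs chi_xs] := character_zero_set chi_char.
exact: hom_tensor_eval_of_zero_set chi_char.1 chi_xs.
Qed.

Lemma tensor_evalD s phi psi :
  tensor_eval s (phi + psi) = tensor_eval s phi + tensor_eval s psi.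
Proof. by rewrite /tensor_eval -big_split; apply: eq_bigr => p _; rewrite mulrzDr. Qed.

Lemma tensor_eval_eq s phi psi :
  (forall i, (i < size s)%N -> phi (nth (0, 0) s i).1 = psi (nth (0, 0) s i).1) ->
  tensor_eval s phi = tensor_eval s psi.
Proof.
move=> eq_s; rewrite /tensor_eval !(big_nth (0, 0)) !big_mkord.
by apply: eq_bigr => i _; rewrite eq_s.
Qed.

Lemma tensor_charE s phi : hom_ZN_Z phi -> tensor_char s phi = tensor_eval s phi.
Proof. by rewrite /tensor_char; case: pselect. Qed.

Lemma tensor_char_out s phi : ~ hom_ZN_Z phi -> tensor_char s phi = 0.
Proof. by rewrite /tensor_char; case: pselect. Qed.

Lemma tensor_char_dual s : dual_S R HomZN (tensor_char s).
Proof.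
split; last exact: tensor_char_out.
split.
  split=> // phi psi phi_hom psi_hom.
  by rewrite !tensor_charE ?tensor_evalD //; exact: (subgroupD HomZN_subgroup phi_hom psi_hom).
move=> W oW; split=> [phi []//|phi0 [phi0_hom W0]].
exists (size s), (fun i => (nth (0, 0) s i).1) => psi psi_hom eq_s; split => //.
by rewrite /preimage /= tensor_charE // (tensor_eval_eq eq_s) -tensor_charE.
Qed.

Lemma dual_tensor_char chi : dual_S R HomZN chi -> exists s, chi = tensor_char s.
Proof.
move=> [chi_char chi_out]; have [s chi_s] := character_tensor_eval chi_char.
exists s; apply: funext => phi.
have [phi_hom|phi_nhom] := pselect (hom_ZN_Z phi).
  by rewrite tensor_charE // chi_s.
by rewrite tensor_char_out // chi_out.
Qed.

Lemma tensor_char_cat s1 s2 :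
  tensor_char (s1 ++ s2) = tensor_char s1 + tensor_char s2.
Proof.
apply: funext => phi.
change (tensor_char (s1 ++ s2) phi = tensor_char s1 phi + tensor_char s2 phi).
have [phi_hom|phi_nhom] := pselect (hom_ZN_Z phi); last by rewrite !tensor_char_out ?addr0.
by rewrite !tensor_charE // /tensor_eval big_cat.
Qed.

Lemma tensor_char_opp s :
  tensor_char [seq (p.1, - p.2) | p <- s] = - tensor_char s.
Proof.
apply: funext => phi.
change (tensor_char [seq (p.1, - p.2) | p <- s] phi = - tensor_char s phi).
have [phi_hom|phi_nhom] := pselect (hom_ZN_Z phi); last by rewrite !tensor_char_out ?oppr0.
rewrite !tensor_charE // /tensor_eval big_map -sumrN.
by apply: eq_bigr => p _; rewrite mulNrz.
Qed.

Lemma dual_subgroup : is_subgroup (dual R HomZN).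
Proof.
split.
  rewrite (_ : 0 = tensor_char [::]); first exact: tensor_char_dual.
  by apply: funext => phi; rewrite /tensor_char /tensor_eval big_nil; case: pselect.
move=> _ _ /dual_tensor_char[s1 ->] /dual_tensor_char[s2 ->].
by rewrite -tensor_char_opp -tensor_char_cat; apply: tensor_char_dual.
Qed.

End Characters.

Definition zero_upto (N : nat) (x : zseq) := forall i, (i < N)%N -> x i = 0.

Lemma zero_upto_le N N' x : (N <= N')%N -> zero_upto N' x -> zero_upto N x.
Proof. by move=> le_N x0 i i_lt; apply: x0; apply: leq_trans le_N. Qed.

Lemma hom_eq_upto phi N x y : hom_ZN_Z phi -> (forall z, zero_upto N z -> phi z = 0) ->
  (forall i, (i < N)%N -> x i = y i) -> phi x = phi y.
Proof.
move=> phi_hom phi_N eq_xy; apply/eqP; rewrite -subr_eq0 -additiveB //.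
by apply/eqP/phi_N => i i_lt; change (x i - y i = 0); rewrite eq_xy // subrr.
Qed.

Lemma exists_common_bound (N : nat) (P : nat -> nat -> Prop) :
  (forall i m m', (m <= m')%N -> P i m -> P i m') ->
  (forall i, (i < N)%N -> exists m, P i m) -> exists M, forall i, (i < N)%N -> P i M.
Proof.
move=> P_mono; elim: N => [|N IH] P_ex; first by exists 0%N.
have [M PM] := IH (fun i i_lt => P_ex i (ltnW i_lt)).
have [m Pm] := P_ex N (ltnSn N).
exists (maxn M m) => i; rewrite ltnS leq_eqVlt => /orP[/eqP ->|i_lt].
  exact: P_mono (leq_maxr M m) Pm.
exact: P_mono (leq_maxl M m) (PM i i_lt).
Qed.

Lemma norm_add_mul_ge (r D q : int) (k : nat) :
  k%:Z <= `|r| -> 2 * `|r| + 1 <= D -> k%:Z <= `|r + D * q|.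
Proof. by move=> r_ge D_ge; have [->|q0] := eqVneq q 0; [rewrite mulr0 addr0 | nia]. Qed.

Lemma norm_add_scaled_ge (s a D : int) (k : nat) :
  1 <= D -> a != 0 -> k%:Z <= `|s + D * (`|s| + k%:Z) * a|.
Proof.
move=> D_ge a0.
have c_ge : `|s| + k%:Z <= D * (`|s| + k%:Z) by nia.
have : `|D * (`|s| + k%:Z) * a| = D * (`|s| + k%:Z) * `|a|.
  by rewrite normrM (ger0_norm (x := D * _)) //; nia.
have : 1 <= `|a| by lia.
nia.
Qed.

(* Given [Phi k] and [Y k] with [Y k] zero up to [k] and [Phi k (Y k) != 0],
   the partial sums [P k] of [sum_k Y k *~ c k] converge coordinatewise, and
   the scales [c k] are chosen so that every later correction is divisible by
   [D (k+1)], which is so large that it cannot cancel [r k = Phi k (P (k+1))]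
   with [|r k| >= k]. *)
Section SpeckerConstruction.
Variables (Phi : nat -> zfun) (Y : nat -> zseq).
Hypothesis Y_zero : forall k, zero_upto k (Y k).

Fixpoint specker_step (k : nat) : int * zseq :=
  if k is k'.+1 then
    let: (D, P) := specker_step k' in
    let c := D * (`|Phi k' P| + k'%:Z) in
    let r := Phi k' P + c * Phi k' (Y k') in
    (D * (2 * `|r| + 1), P + Y k' *~ c)
  else (1, 0).

Let D k := (specker_step k).1.
Let P k := (specker_step k).2.
Let c k := D k * (`|Phi k (P k)| + k%:Z).
Let r k := Phi k (P k) + c k * Phi k (Y k).

Let DS k : D k.+1 = D k * (2 * `|r k| + 1).
Proof. by rewrite /r /c /D /P /=; case: specker_step. Qed.

Let PS k : P k.+1 = P k + Y k *~ c k.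
Proof. by rewrite /c /D /P /=; case: specker_step. Qed.

Let D_ge1 k : 1 <= D k.
Proof. by elim: k => [|k IH]; rewrite ?DS //; nia. Qed.

Let D_dvd k m : (k <= m)%N -> (D k %| D m)%Z.
Proof.
elim: m => [|m IH]; first by rewrite leqn0 => /eqP ->.
rewrite leq_eqVlt => /orP[/eqP ->|]; first exact: dvdzz.
by rewrite ltnS => /IH k_m; rewrite DS; apply: dvdz_mulr.
Qed.

Let P_stable i m : (i < m)%N -> P m i = P i.+1 i.
Proof.
elim: m => [//|m IH]; rewrite ltnS leq_eqVlt => /orP[/eqP ->//|i_lt].
by rewrite PS addrfctE /= fctMz (Y_zero i_lt) mul0rz addr0 IH.
Qed.

Definition specker_limit : zseq := fun i => P i.+1 i.

Let limit_congr k : exists w : zseq, specker_limit = P k.+1 + w *~ D k.+1.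
Proof.
have dvd i : (D k.+1 %| specker_limit i - P k.+1 i)%Z.
  have gen m : (k.+1 <= m)%N -> (D k.+1 %| P m i - P k.+1 i)%Z.
    elim: m => [//|m IH]; rewrite leq_eqVlt => /orP[/eqP ->|k_m].
      by rewrite subrr dvdz0.
    rewrite PS addrfctE /= fctMz mulrzz addrAC; apply: rpredD; first exact: IH.
    by apply/dvdz_mull/dvdz_mulr/D_dvd.
  rewrite /specker_limit -(P_stable (m := maxn i.+1 k.+1)) ?leq_max ?ltnS ?leqnn //.
  by apply: gen; rewrite leq_max leqnn orbT.
exists (fun i => ((specker_limit i - P k.+1 i) %/ D k.+1)%Z).
by apply: funext => i; rewrite addrfctE /= fctMz mulrzz divzK // addrC subrK.
Qed.

Lemma specker_limit_large k : hom_ZN_Z (Phi k) -> Phi k (Y k) != 0 ->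
  k%:Z <= `|Phi k specker_limit|.
Proof.
move=> Phi_hom Y_nz; have [w ->] := limit_congr k.
rewrite Phi_hom additiveMz // PS Phi_hom additiveMz // !mulrzz.
rewrite [Phi k (Y k) * _]mulrC -/(r k) [Phi k w * _]mulrC.
apply: norm_add_mul_ge; last by rewrite DS; have := D_ge1 k; nia.
exact: norm_add_scaled_ge (D_ge1 k) Y_nz.
Qed.

End SpeckerConstruction.

Lemma specker_common_support (K : set zfun) :
  (forall phi, K phi -> hom_ZN_Z phi) ->
  (forall x, exists M : nat, forall phi, K phi -> `|phi x| <= M%:Z) ->
  exists N, forall phi, K phi -> forall x, zero_upto N x -> phi x = 0.
Proof.
move=> K_hom K_bounded; apply: contrapT => no_support.
have bad N : exists p : zfun * zseq, [/\ K p.1, zero_upto N p.2 & p.1 p.2 != 0].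
  apply: contrapT => none; apply: no_support; exists N => phi Kphi x x0.
  by apply: contrapT => /eqP nz; apply: none; exists (phi, x).
have [F F_bad] := choice bad.
pose Phi k := (F k).1; pose Y k := (F k).2.
have Y_zero k : zero_upto k (Y k) by case: (F_bad k).
have [M bound] := K_bounded (specker_limit Phi Y).
have [KM _ nzM] := F_bad M.+1.
have := le_trans (@specker_limit_large Phi Y Y_zero M.+1 (K_hom _ KM) nzM) (bound _ KM).
by rewrite lez_nat ltnn.
Qed.

Lemma hom_finite_support q : hom_ZN_Z q ->
  exists N, forall x, zero_upto N x -> q x = 0.
Proof.
move=> q_hom; have [|x|N qN] := @specker_common_support [set q]; first by move=> _ ->.
  by exists `|q x|%N => _ ->; rewrite abszE.
by exists N; apply: qN.
Qed.

Lemma compact_pointwise_bounded (K : set zfun) x : is_compact HomZN K ->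
  exists M : nat, forall phi, K phi -> `|phi x| <= M%:Z.
Proof.
move=> [K_hom K_cpt].
pose O (m : nat) : set zfun := [set phi | hom_ZN_Z phi /\ `|phi x| < m%:Z].
have O_open : [set O m | m in setT] `<=` tg_open HomZN.
  move=> _ [m _ <-]; split=> [phi []//|phi [phi_hom phi_lt]].
  by exists 1%N, (fun _ => x) => psi psi_hom eq_x; rewrite /O /= (eq_x 0%N).
have K_cover : K `<=` \bigcup_(U in [set O m | m in setT]) U.
  move=> phi Kphi; exists (O `|phi x|.+1%N); first by exists `|phi x|.+1%N.
  split; first exact: K_hom.
  by rewrite -[X in X < _]gez0_abs ?normr_ge0 // ltz_nat.
have [n [f [f_O K_f]]] := K_cpt _ O_open K_cover.
have [||M f_M] := @exists_common_bound n (fun i m => f i `<=` O m).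
- move=> i m m' le_m f_m phi /f_m [phi_hom lt_m]; split => //.
  by apply: lt_le_trans lt_m _; rewrite lez_nat.
- by move=> i /f_O [m _ <-]; exists m.
- exists M => phi /K_f [i i_lt /(f_M i i_lt) [_]]; exact: ltW.
Qed.

Definition int_range (M : nat) : seq int := [seq i%:Z - M%:Z | i <- iota 0 (M + M).+1].

Lemma mem_int_range M a : `|a| <= M%:Z -> a \in int_range M.
Proof.
move=> a_le; apply/mapP; exists (absz (a + M%:Z)); first by rewrite mem_iota; lia.
by rewrite gez0_abs; [rewrite addrK | lia].
Qed.

Fixpoint int_vectors (N M : nat) : seq (seq int) :=
  if N is N'.+1 then [seq a :: v | a <- int_range M, v <- int_vectors N' M]
  else [:: [::]].

Lemma mem_int_vectors M (v : seq int) :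
  all (fun a => `|a| <= M%:Z) v -> v \in int_vectors (size v) M.
Proof.
elim: v => [|a v IH]; first by rewrite mem_seq1.
move=> /andP[a_le v_le].
exact: (allpairs_f (fun a v => a :: v) (mem_int_range a_le) (IH v_le)).
Qed.

Definition unit_vector (i : nat) : zseq := fun j => (j == i)%:Z.

Definition hom_of_coords (v : seq int) : zfun := fun x => \sum_(i < size v) x i * v`_i.

Lemma hom_of_coords_hom v : hom_ZN_Z (hom_of_coords v).
Proof.
by move=> x y; rewrite /hom_of_coords -big_split; apply: eq_bigr => i _; rewrite mulrDl.
Qed.

Lemma hom_of_coordsE phi N : hom_ZN_Z phi -> (forall x, zero_upto N x -> phi x = 0) ->
  phi = hom_of_coords (mkseq (fun i => phi (unit_vector i)) N).
Proof.
move=> phi_hom phi_N; apply: funext => x; rewrite /hom_of_coords size_mkseq.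
have -> : phi x = phi (\sum_(i < N) unit_vector i *~ x i).
  apply: hom_eq_upto phi_N _ => // i i_lt; rewrite fct_sumE (bigD1 (Ordinal i_lt)) //=.
  rewrite fctMz /unit_vector eqxx mulrzz mul1r big1 ?addr0 // => j /eqP ji.
  rewrite fctMz /= (_ : (i == j) = false) ?mul0rz //.
  by apply/eqP => ij; apply/ji/val_inj; rewrite /= ij.
rewrite (big_morph phi phi_hom (additive0 phi_hom)); apply: eq_bigr => i _.
by rewrite additiveMz // nth_mkseq // mulrzz mulrC.
Qed.

Lemma In_of_mem (A : eqType) (a : A) s : a \in s -> List.In a s.
Proof. by elim: s => [//|b s IH]; rewrite inE => /orP[/eqP ->|/IH]; [left | right]. Qed.

Lemma bounded_support_finite (N M : nat) : exists qs : seq zfun,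
  (forall q, List.In q qs -> hom_ZN_Z q) /\
  forall phi, hom_ZN_Z phi -> (forall x, zero_upto N x -> phi x = 0) ->
    (forall i, (i < N)%N -> `|phi (unit_vector i)| <= M%:Z) -> List.In phi qs.
Proof.
exists [seq hom_of_coords v | v <- int_vectors N M]; split.
  by move=> q /List.in_map_iff [v [<- _]]; apply: hom_of_coords_hom.
move=> phi phi_hom phi_N phi_M; rewrite (hom_of_coordsE phi_hom phi_N).
apply/List.in_map/In_of_mem.
rewrite -[X in int_vectors X](size_mkseq (fun i => phi (unit_vector i)) N).
apply: mem_int_vectors; apply/allP => a /mapP [i]; rewrite mem_iota => /andP[_ i_lt] ->.
exact: phi_M.
Qed.

Lemma compact_finite (K : set zfun) : is_compact HomZN K ->
  exists qs : seq zfun,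
    (forall q, List.In q qs -> hom_ZN_Z q) /\ K `<=` [set q | List.In q qs].
Proof.
move=> K_cpt; have [K_hom _] := K_cpt.
have [N K_N] := specker_common_support K_hom (fun x => @compact_pointwise_bounded K x K_cpt).
have [||M K_M] := @exists_common_bound N
    (fun i m => forall phi, K phi -> `|phi (unit_vector i)| <= m%:Z).
- by move=> i m m' le_m K_m phi /K_m /le_trans; apply; rewrite lez_nat.
- by move=> i _; apply: compact_pointwise_bounded.
have [qs [qs_hom qs_K]] := bounded_support_finite N M.
exists qs; split => // phi Kphi; apply: qs_K; [exact: K_hom | exact: K_N |].
by move=> i i_lt; apply: K_M.
Qed.

Section PointwiseTopology.
Variable R : realType.
Notation T := (torus R).
Implicit Types (L : seq (zfun * set T)) (W : set (zfun -> T)).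

(* A finite list of pairs [(q, U)] encodes the basic neighbourhood of
   pointwise convergence [{psi | psi q \in U for all (q, U)}]. *)
Definition basic_family L :=
  forall p, List.In p L -> hom_ZN_Z p.1 /\ torus_open R p.2.

Definition basic_nbhd L : set (zfun -> T) :=
  [set psi | dual_S R HomZN psi /\ forall p, List.In p L -> p.2 (psi p.1)].

Definition pointwise_open W :=
  W `<=` dual_S R HomZN /\
  forall chi, W chi -> exists L, [/\ basic_family L, basic_nbhd L chi & basic_nbhd L `<=` W].

Lemma singleton_compact q : hom_ZN_Z q -> is_compact HomZN [set q].
Proof.
move=> q_hom; split=> [_ -> //|F _ cover].
have [U FU Uq] := cover q erefl.
by exists 1%N, (fun _ => U); split => // _ ->; exists 0%N.
Qed.

Lemma compact_open_of_pointwise W : pointwise_open W -> compact_open R HomZN W.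
Proof.
move=> [W_dual W_nbhd]; split => // chi /W_nbhd [L [L_basic [_ chi_L] L_W]].
pose d : zfun * set T := (0, setT).
exists (List.length L), (fun i => [set (List.nth i L d).1]), (fun i => (List.nth i L d).2).
split=> [i /ssrnat.ltP i_lt|psi psi_dual psi_L].
  have [q_hom U_open] := L_basic _ (List.nth_In L d i_lt).
  split => //; first exact: singleton_compact.
  by move=> _ [_ -> <-]; apply/chi_L/List.nth_In.
apply: L_W; split => // p /(List.In_nth L p d) [i [/ssrnat.ltP i_lt <-]].
by apply: (psi_L i i_lt); exists (List.nth i L d).1.
Qed.

(* Compact subsets of [G] are finite, so the compact-open topology of the dual
   is the topology of pointwise convergence. *)
Lemma pointwise_of_compact_open W : compact_open R HomZN W -> pointwise_open W.
Proof.
move=> [W_dual W_open]; split => // chi Wchi.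
have [n [K [U [KU_ok KU_W]]]] := W_open chi Wchi.
have fin i : exists qs : seq zfun, (i < n)%N ->
    (forall q, List.In q qs -> hom_ZN_Z q) /\ K i `<=` [set q | List.In q qs].
  have [i_lt|] := ltnP i n; last by exists [::].
  by have [K_cpt _ _] := KU_ok i i_lt; have [qs] := compact_finite K_cpt; exists qs.
have [qs qs_K] := choice fin.
pose L := List.flat_map (fun i => [seq (q, [set z | K i q -> U i z]) | q <- qs i])
  (List.seq 0 n).
have L_inv p : List.In p L -> exists i q,
    [/\ (i < n)%N, List.In q (qs i) & p = (q, [set z | K i q -> U i z])].
  move=> /List.in_flat_map [i [/List.in_seq i_lt /List.in_map_iff [q [<- q_in]]]].
  by exists i, q; split => //; apply/ssrnat.ltP; lia.
exists L; split.
- move=> p /L_inv [i [q [i_lt q_in ->]]]; have [qs_hom _] := qs_K i i_lt.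
  split; first exact: qs_hom.
  have [_ U_open _] := KU_ok i i_lt.
  have [Kq|nKq] := pselect (K i q) => z /= Uz.
    by have [e [e_pos e_U]] := U_open z (Uz Kq); exists e; split => // y /e_U.
  by exists 1; split => // y _ /nKq.
- split=> [|p /L_inv [i [q [i_lt _ ->]]] /= Kq]; first exact: W_dual.
  by have [_ _ chi_KU] := KU_ok i i_lt; apply: chi_KU; exists q.
- move=> psi [psi_dual psi_L]; apply: KU_W => // i i_lt _ [q Kq <-].
  have [_ /(_ q Kq) q_in] := qs_K i i_lt.
  apply: (psi_L (q, [set z | K i q -> U i z])) => //.
  apply/List.in_flat_map; exists i; split; first by apply/List.in_seq; lia.
  by apply: List.in_map.
Qed.

Lemma basic_nbhd_open L : basic_family L -> compact_open R HomZN (basic_nbhd L).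
Proof.
move=> L_basic; apply: compact_open_of_pointwise; split=> [psi []//|chi chi_L].
by exists L; split.
Qed.

End PointwiseTopology.

Section DualInQ.
Variable R : realType.
Notation T := (torus R).
Notation D := (dual R HomZN).
Implicit Types (L : seq (zfun * set T)) (W : set (zfun -> T)).

Lemma dual_topology : is_topology D.
Proof.
split.
- by move=> U [].
- split=> // chi chi_dual.
  by exists 0%N, (fun _ => set0), (fun _ => set0); split.
- move=> U V /pointwise_of_compact_open [U_dual U_nbhd] /pointwise_of_compact_open[_ V_nbhd].
  apply: compact_open_of_pointwise; split=> [chi [/U_dual]//|chi [Uchi Vchi]].
  have [L1 [L1_basic [chi_dual chi_L1] L1_U]] := U_nbhd chi Uchi.
  have [L2 [L2_basic [_ chi_L2] L2_U]] := V_nbhd chi Vchi.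
  exists (L1 ++ L2)%list; split.
  + by move=> p /List.in_app_iff[]; [apply: L1_basic | apply: L2_basic].
  + by split=> // p /List.in_app_iff[]; [apply: chi_L1 | apply: chi_L2].
  + move=> psi [psi_dual psi_L]; split.
      by apply: L1_U; split => // p p_in; apply: psi_L; apply/List.in_app_iff; left.
    by apply: L2_U; split => // p p_in; apply: psi_L; apply/List.in_app_iff; right.
- move=> F F_open; split=> [chi [U FU Uchi]|chi [U FU Uchi]]; first exact: (F_open U FU).1.
  have [n [K [V [KV_ok KV_U]]]] := (F_open U FU).2 chi Uchi.
  exists n, K, V; split => // psi psi_dual psi_KV; exists U => //; exact: KV_U.
Qed.

Lemma dual_sub_continuous : sub_continuous D.
Proof.
move=> chi1 chi2 W chi1_dual chi2_dual /pointwise_of_compact_open[_ W_nbhd] W12.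
have [L [L_basic [_ chi_L] L_W]] := W_nbhd _ W12.
have radius p : exists e : R, List.In p L ->
    0 < e /\ forall y, tabs R (y - (chi1 - chi2) p.1) < e -> p.2 y.
  have [p_in|] := pselect (List.In p L); last by exists 0.
  have [_ p_open] := L_basic p p_in.
  by have [e e_ok] := p_open _ (chi_L p p_in); exists e.
have [e e_ok] := choice radius.
pose balls (chi : zfun -> T) := [seq (p.1, tball (chi p.1) (e p / 2)) | p <- L].
have balls_basic chi : basic_family (balls chi).
  move=> pp /List.in_map_iff [p [<- p_in]].
  by split; [exact: (L_basic p p_in).1 | exact: tball_open].
have balls_center chi : dual_S R HomZN chi -> basic_nbhd (balls chi) chi.
  split=> // pp /List.in_map_iff [p [<- p_in]]; apply: tball_center.
  by have [e_pos _] := e_ok p p_in; lra.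
exists (basic_nbhd (balls chi1)), (basic_nbhd (balls chi2)).
split; [exact: basic_nbhd_open | exact: basic_nbhd_open | exact: balls_center |
        exact: balls_center |].
move=> u v [u_dual u_near] [v_dual v_near]; apply: L_W.
split=> [|p p_in]; first exact: (subgroupB (dual_subgroup R)).
have [e_pos e_p] := e_ok p p_in; apply: e_p.
have := u_near _ (List.in_map (fun p => (p.1, tball (chi1 p.1) (e p / 2))) _ _ p_in).
have := v_near _ (List.in_map (fun p => (p.1, tball (chi2 p.1) (e p / 2))) _ _ p_in).
rewrite /tball /= => v_lt u_lt.
have -> : u p.1 - v p.1 - (chi1 p.1 - chi2 p.1) =
    (u p.1 - chi1 p.1) - (v p.1 - chi2 p.1).
  by rewrite !opprB addrACA [in RHS]addrACA (addrC (- chi1 p.1)).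
by have := tabsD (u p.1 - chi1 p.1) (- (v p.1 - chi2 p.1)); rewrite tabsN; lra.
Qed.

Lemma dual_hausdorff : hausdorff D.
Proof.
move=> chi1 chi2 chi1_dual chi2_dual chi12.
have [phi phi_neq] : exists phi, chi1 phi <> chi2 phi.
  apply: contrapT => eq12; apply/chi12/funext => phi.
  by apply: contrapT => neq; apply: eq12; exists phi.
have phi_hom : hom_ZN_Z phi.
  by apply: contrapT => phi_nhom; apply: phi_neq; rewrite chi1_dual.2 // chi2_dual.2.
pose e := tabs R (chi1 phi - chi2 phi) / 2.
have e_pos : 0 < e.
  rewrite divr_gt0 // lt_neqAle tabs_ge0 andbT; apply/eqP => /esym/tabs_eq0/eqP.
  by rewrite subr_eq0 => /eqP.
have ball_basic c : basic_family [:: (phi, tball c e)].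
  by move=> pp [<-|//]; split => //; apply: tball_open.
have ball_center chi : dual_S R HomZN chi -> basic_nbhd [:: (phi, tball (chi phi) e)] chi.
  by split=> // pp [<-|//]; apply: tball_center.
exists (basic_nbhd [:: (phi, tball (chi1 phi) e)]), (basic_nbhd [:: (phi, tball (chi2 phi) e)]).
split; [exact: basic_nbhd_open | exact: basic_nbhd_open | exact: ball_center |
        exact: ball_center |].
apply/seteqP; split => // psi [[_ psi1] [_ psi2]].
have := psi1 _ (or_introl erefl); have := psi2 _ (or_introl erefl).
rewrite /tball /= => lt2 lt1; have := tabsBB (chi1 phi) (psi phi) (chi2 phi).
by rewrite tabsB in lt1; rewrite /e in lt1 lt2 e_pos; lra.
Qed.

Lemma eval_character q : hom_ZN_Z q -> character R D (fun chi => chi q).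
Proof.
move=> q_hom; split=> // W W_open; apply: compact_open_of_pointwise.
split=> [chi []//|chi [chi_dual W_chi]].
exists [:: (q, W)]; split; [by move=> pp [<-|] | by split=> // pp [<-|] |].
by move=> psi [psi_dual psi_W]; split => //; exact: (psi_W _ (or_introl erefl)).
Qed.

Lemma torus_open_small_multiples (U : set T) : torus_open R U -> U 0 ->
  exists m : nat, (0 < m)%N /\ forall w, m%:R * tabs R w <= 4^-1 -> U w.
Proof.
move=> U_open U0; have [e [e_pos e_U]] := U_open 0 U0.
have [n n_gt] := exists_nat_gt (4 * e)^-1.
exists n.+1; split => // w w_small; apply: e_U; rewrite subr0.
have : 4^-1 < n.+1%:R * e.
  rewrite -[n.+1]addn1 natrD mulrDl mul1r.
  have : (4 * e)^-1 * e = 4^-1 by field; lra.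
  have := ler0n R n; nra.
have := tabs_ge0 w; nra.
Qed.

(* The quasi-convex set is cut out by the evaluations at the multiples
   [q *+ l], [l <= m], of the points [q] of a basic neighbourhood. *)
Lemma dual_loc_quasi_convex : loc_quasi_convex R D.
Proof.
move=> W /pointwise_of_compact_open[_ W_nbhd] W0.
have [L [L_basic [_ zero_L] L_W]] := W_nbhd _ W0.
have mult p : exists m : nat, List.In p L ->
    (0 < m)%N /\ forall w, m%:R * tabs R w <= 4^-1 -> p.2 w.
  have [p_in|] := pselect (List.In p L); last by exists 0%N.
  have [m m_ok] := torus_open_small_multiples (L_basic p p_in).2 (zero_L p p_in).
  by exists m.
have [m m_ok] := choice mult.
pose Q := List.flat_map (fun p => [seq p.1 *+ l | l <- List.seq 1 (m p)]) L.
have Q_hom q : List.In q Q -> hom_ZN_Z q.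
  move=> /List.in_flat_map [p [p_in /List.in_map_iff [l [<- _]]]].
  exact: (subgroupMn HomZN_subgroup l (L_basic p p_in).1).
pose A := [set psi | dual_S R HomZN psi /\ forall q, List.In q Q -> tabs R (psi q) <= 4^-1].
exists A; split.
- split=> [psi []//|chi chi_dual chi_nA].
  have [q [q_in q_gt]] : exists q, List.In q Q /\ 4^-1 < tabs R (chi q).
    apply: contrapT => none; apply: chi_nA; split => // q q_in; rewrite leNgt.
    by apply/negP => q_gt; apply: none; exists q.
  exists (fun chi => chi q); split; first exact: eval_character (Q_hom q q_in).
    by move=> psi [_]; apply.
  exact: q_gt.
- move=> psi [psi_dual psi_Q]; apply: L_W; split => // p p_in.
  have [m_pos m_p] := m_ok p p_in; apply/m_p/muln_tabs_le => // l l_pos l_le.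
  rewrite -(homMn HomZN_subgroup psi_dual.1.1) //; last exact: (L_basic p p_in).1.
  apply: psi_Q; apply/List.in_flat_map; exists p; split => //.
  by apply: List.in_map; apply/List.in_seq; lia.
- pose L0 := [seq (q, tball (0 : T) 4^-1) | q <- Q].
  have L0_basic : basic_family L0.
    by move=> pp /List.in_map_iff [q [<- q_in]]; split; [exact: Q_hom | exact: tball_open].
  exists (basic_nbhd L0); split; first exact: basic_nbhd_open.
    split=> [|pp /List.in_map_iff [q [<- _]]]; first exact: (subgroup0 (dual_subgroup R)).
    by apply: tball_center; lra.
  move=> psi [psi_dual psi_L0]; split => // q q_in.
  have := psi_L0 _ (List.in_map (fun q => (q, tball (0 : T) 4^-1)) _ _ q_in).
  by rewrite /tball /= subr0 => /ltW.
Qed.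

Lemma dual_in_Q : in_Q R D.
Proof.
split; last exact: dual_loc_quasi_convex; last exact: dual_hausdorff.
by split; [exact: dual_subgroup | exact: dual_topology | exact: dual_sub_continuous].
Qed.

End DualInQ.

Section TensorBihom.
Variable R : realType.
Notation T := (torus R).
Notation D := (dual R HomZN).
Implicit Types (L : seq (zfun * set T)).

Definition pure_tensor (x : zseq) (z : T) : zfun -> T := tensor_char [:: (x, z)].

Lemma pure_tensorE (x : zseq) (z : T) phi : hom_ZN_Z phi -> pure_tensor x z phi = z *~ phi x.
Proof. by move=> phi_hom; rewrite /pure_tensor tensor_charE // /tensor_eval big_seq1. Qed.

Lemma pure_tensor_out (x : zseq) (z : T) phi : ~ hom_ZN_Z phi -> pure_tensor x z phi = 0.
Proof. exact: tensor_char_out. Qed.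

Lemma pure_tensorDl (x y : zseq) (z : T) :
  pure_tensor (x + y) z = pure_tensor x z + pure_tensor y z.
Proof.
apply: funext => phi.
change (pure_tensor (x + y) z phi = pure_tensor x z phi + pure_tensor y z phi).
have [phi_hom|phi_nhom] := pselect (hom_ZN_Z phi).
  by rewrite !pure_tensorE // phi_hom mulrzDr.
by rewrite !pure_tensor_out ?addr0.
Qed.

Lemma pure_tensorDr (x : zseq) (z1 z2 : T) :
  pure_tensor x (z1 + z2) = pure_tensor x z1 + pure_tensor x z2.
Proof.
apply: funext => phi.
change (pure_tensor x (z1 + z2) phi = pure_tensor x z1 phi + pure_tensor x z2 phi).
have [phi_hom|phi_nhom] := pselect (hom_ZN_Z phi).
  by rewrite !pure_tensorE // mulrzDl.
by rewrite !pure_tensor_out ?addr0.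
Qed.

Lemma sum_pure_tensor s : \sum_(p <- s) pure_tensor p.1 p.2 = tensor_char s.
Proof.
elim: s => [|p s IH].
  rewrite big_nil; apply: funext => phi.
  by rewrite /tensor_char /tensor_eval big_nil; case: pselect.
by rewrite big_cons IH /pure_tensor -tensor_char_cat; case: p.
Qed.

Lemma mulz_preimage_open (U : set T) (a : int) :
  torus_open R U -> torus_open R [set z | U (z *~ a)].
Proof.
move=> U_open z0 /= U_z0; have [e [e_pos e_U]] := U_open _ U_z0.
have a1_pos : 0 < `|a%:~R : R| + 1 by have := normr_ge0 (a%:~R : R); lra.
exists (e / (`|a%:~R| + 1)); split; first exact: divr_gt0.
move=> y y_near; apply: e_U; rewrite -mulrzBl; apply: le_lt_trans (tabsMz _ _) _.
have : tabs R (y - z0) * (`|a%:~R| + 1) < e by rewrite -ltr_pdivlMr.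
by have := tabs_ge0 (y - z0); nra.
Qed.

Lemma finite_inter_open (A : Type) (L : seq A) (P : A -> set T) :
  (forall p, List.In p L -> torus_open R (P p)) ->
  torus_open R [set z | forall p, List.In p L -> P p z].
Proof.
elim: L => [|p L IH] P_open z z_in; first by exists 1; split => // y _ p [].
have [e1 [e1_pos e1_P]] := P_open p (or_introl erefl) z (z_in p (or_introl erefl)).
have [e2 [e2_pos e2_P]] := IH (fun q q_in => P_open q (or_intror q_in)) z
  (fun q q_in => z_in q (or_intror q_in)).
exists (Num.min e1 e2); split; first by rewrite lt_min e1_pos e2_pos.
move=> y; rewrite lt_min => /andP[y_e1 y_e2] q [<-|q_in]; first exact: e1_P.
exact: e2_P.
Qed.

Lemma basic_family_support L : basic_family L ->
  exists N, forall p, List.In p L -> forall x, zero_upto N x -> p.1 x = 0.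
Proof.
elim: L => [|p L IH] L_basic; first by exists 0%N.
have [N N_L] := IH (fun q q_in => L_basic q (or_intror q_in)).
have [N' N'_p] := hom_finite_support (L_basic p (or_introl erefl)).1.
exists (maxn N N') => q [<-|q_in] x x0.
  by apply: N'_p; apply: zero_upto_le x0; apply: leq_maxr.
by apply: N_L => //; apply: zero_upto_le x0; apply: leq_maxl.
Qed.

Lemma pure_tensor_cont_r (x : zseq) : cont_hom (TT R) D (pure_tensor x).
Proof.
split; first by split=> [z _|z1 z2 _ _]; [exact: tensor_char_dual | exact: pure_tensorDr].
move=> W /pointwise_of_compact_open[_ W_nbhd] z0 [_ W_z0].
have [L [L_basic [_ z0_L] L_W]] := W_nbhd _ W_z0.
have S_open : torus_open R [set z | forall p, List.In p L -> p.2 (z *~ p.1 x)].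
  by apply: finite_inter_open => p p_in; apply: mulz_preimage_open (L_basic p p_in).2.
have [|e [e_pos e_L]] := S_open z0.
  by move=> p p_in; have := z0_L p p_in; rewrite pure_tensorE //; exact: (L_basic p p_in).1.
exists e; split => // z z_near; split => //; apply: L_W; split=> [|p p_in].
  exact: tensor_char_dual.
by rewrite pure_tensorE; [apply: e_L | exact: (L_basic p p_in).1].
Qed.

Lemma pure_tensor_cont_l (z : T) : cont_hom ZN D (pure_tensor ^~ z).
Proof.
split; first by split=> [x _|x y _ _]; [exact: tensor_char_dual | exact: pure_tensorDl].
move=> W /pointwise_of_compact_open[_ W_nbhd] x0 [_ W_x0].
have [L [L_basic [_ x0_L] L_W]] := W_nbhd _ W_x0.
have [N N_L] := basic_family_support L_basic.
exists N => x eq_x0; split => //; apply: L_W; split=> [|p p_in].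
  exact: tensor_char_dual.
have p_hom := (L_basic p p_in).1.
by rewrite pure_tensorE // (hom_eq_upto p_hom (N_L p p_in) eq_x0) -pure_tensorE //; apply: x0_L.
Qed.

Lemma pure_tensor_bihom : cont_bihom ZN (TT R) D pure_tensor.
Proof.
split=> [x _|z _|W /pointwise_of_compact_open[_ W_nbhd] W0].
- exact: pure_tensor_cont_r.
- exact: pure_tensor_cont_l.
have [L [L_basic [_ zero_L] L_W]] := W_nbhd _ W0.
have [N N_L] := basic_family_support L_basic.
exists (zero_upto N), setT; split => //.
- move=> x x0; exists N => y eq_xy i i_lt; rewrite eq_xy //; exact: x0.
- by move=> z _; exists 1; split.
move=> u v u0 _; apply: L_W; split=> [|p p_in]; first exact: tensor_char_dual.
have p_hom := (L_basic p p_in).1.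
by have := zero_L p p_in; rewrite !pure_tensorE // !N_L // !mulr0z.
Qed.

End TensorBihom.

Section TensorProduct.
Variable R : realType.
Notation T := (torus R).
Notation D := (dual R HomZN).
Variables (H : tgrp) (t : zseq -> T -> tg_V H).
Hypotheses (H_Q : in_Q R H) (t_bihom : cont_bihom ZN (TT R) H t).

Let subH : is_subgroup H. Proof. by case: H_Q => [[]]. Qed.

Let t_cont_r x : cont_hom (TT R) H (t x). Proof. by case: t_bihom => + _ _; apply. Qed.

Let t_mem x z : tg_S H (t x z). Proof. by case: (t_cont_r x) => [[+ _] _]; apply. Qed.

Let tDl x y z : t (x + y) z = t x z + t y z.
Proof. by case: t_bihom => _ + _ => /(_ z I) [[_ +] _]; apply. Qed.

Lemma characters_separate y : tg_S H y -> y <> 0 ->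
  exists2 xi, character R H xi & xi y <> 0.
Proof.
move=> Hy y0; case: H_Q => [[_ _ _] H_sep H_lqc].
have [U [V [_ V_open Uy V0 UV0]]] := H_sep y 0 Hy (subgroup0 subH) y0.
have [A [[_ A_qc] A_V _]] := H_lqc V V_open V0.
have [|xi [xi_char _ xi_y]] := A_qc y Hy.
  move=> Ay; have : (U `&` V) y by split => //; apply: A_V.
  by rewrite UV0.
by exists xi => // xi_y0; move: xi_y; rewrite xi_y0 tabs0; lra.
Qed.

Lemma character_tensor_coeffs xi : character R H xi ->
  exists2 k, hom_ZN_Z k & forall x z, xi (t x z) = z *~ k x.
Proof.
move=> xi_char.
have [k k_xz] := choice (fun x => torus_cont_endo_mulz (cont_hom_comp (t_cont_r x) xi_char)).
have xi_k x z : xi (t x z) = z *~ k x := k_xz x z.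
exists k => // x y; apply: (@mulz_torus_inj R) => z.
by rewrite -xi_k tDl (homD xi_char.1) // !xi_k mulrzDr.
Qed.

Definition tensor_sum (s : seq (zseq * T)) : tg_V H := \sum_(p <- s) t p.1 p.2.

Lemma tensor_sum_mem s : tg_S H (tensor_sum s).
Proof. exact: subgroup_sum. Qed.

Lemma hom_tensor_sum (B : tgrp) (g : tg_V H -> tg_V B) s : is_hom H B g ->
  g (tensor_sum s) = \sum_(p <- s) g (t p.1 p.2).
Proof. by move=> g_hom; rewrite /tensor_sum (hom_sum subH g_hom). Qed.

Lemma character_tensor_sum xi k s : character R H xi ->
  (forall x z, xi (t x z) = z *~ k x) -> xi (tensor_sum s) = tensor_eval s k.
Proof.
move=> xi_char xi_k; rewrite (hom_tensor_sum _ xi_char.1).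
by apply: eq_bigr => p _; rewrite xi_k.
Qed.

(* The characters of [H] separate points and see [tensor_sum s] only through
   the action of [s] on [G]. *)
Lemma tensor_sum_eq s1 s2 : tensor_char s1 = tensor_char s2 ->
  tensor_sum s1 = tensor_sum s2.
Proof.
move=> eq_s; apply/eqP; rewrite -subr_eq0; apply/eqP; apply: contrapT => ne.
have diff_mem := subgroupB subH (tensor_sum_mem s1) (tensor_sum_mem s2).
have [xi xi_char] := characters_separate diff_mem ne.
have [k k_hom xi_k] := character_tensor_coeffs xi_char.
move=> []; rewrite (homB subH xi_char.1 (tensor_sum_mem s1) (tensor_sum_mem s2)).
rewrite (character_tensor_sum s1 xi_char xi_k) (character_tensor_sum s2 xi_char xi_k).
by rewrite -!tensor_charE // eq_s subrr.
Qed.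

Definition dual_to_tensor (chi : zfun -> T) : tg_V H :=
  if pselect (exists s, chi = tensor_char s) is left ex then tensor_sum (projT1 (cid ex))
  else 0.

Lemma dual_to_tensorE s : dual_to_tensor (tensor_char s) = tensor_sum s.
Proof.
rewrite /dual_to_tensor; case: pselect => [ex|]; last by case; exists s.
by apply: tensor_sum_eq; rewrite -(projT2 (cid ex)).
Qed.

Lemma dual_to_tensor_pure x z : dual_to_tensor (pure_tensor x z) = t x z.
Proof. by rewrite dual_to_tensorE /tensor_sum big_seq1. Qed.

Lemma character_dual_to_tensor xi k chi : character R H xi ->
  (forall x z, xi (t x z) = z *~ k x) -> hom_ZN_Z k -> dual_S R HomZN chi ->
  xi (dual_to_tensor chi) = chi k.
Proof.
move=> xi_char xi_k k_hom /dual_tensor_char [s ->].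
by rewrite dual_to_tensorE (character_tensor_sum _ xi_char xi_k) tensor_charE.
Qed.

Lemma dual_to_tensor_hom : is_hom D H dual_to_tensor.
Proof.
split=> [chi /dual_tensor_char [s ->]|_ _ /dual_tensor_char[s1 ->] /dual_tensor_char[s2 ->]].
  by rewrite dual_to_tensorE; apply: tensor_sum_mem.
by rewrite -tensor_char_cat !dual_to_tensorE /tensor_sum big_cat.
Qed.

(* Joint continuity of [t] at [(0, 0)] and continuity of the [t (e_i)] bound
   the coefficient homomorphisms of the characters in the polar of [V]: their
   support lies below some [N] and their values on the [e_i] are bounded. *)
Lemma polar_coeffs_finite (V : set (tg_V H)) : tg_open H V -> V 0 ->
  exists qs : seq zfun, (forall q, List.In q qs -> hom_ZN_Z q) /\
    forall xi k, character R H xi -> hom_ZN_Z k -> (forall x z, xi (t x z) = z *~ k x) ->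
      (forall y, V y -> tabs R (xi y) <= 4^-1) -> List.In k qs.
Proof.
move=> V_open V0.
have t_x0 x : t x 0 = 0 by rewrite (hom0 (_ : is_subgroup (TT R)) (t_cont_r x).1).
have [UZ [VT [UZ_open VT_open UZ0 VT0 UV]]] : exists UZ VT,
    [/\ tg_open ZN UZ, torus_open R VT, UZ 0, VT 0 & forall u v, UZ u -> VT v -> V (t u v)].
  by case: t_bihom => _ _ /(_ V V_open); apply; rewrite t_x0.
have [N N_UZ] := UZ_open 0 UZ0.
have [del [del_pos del_VT]] := VT_open 0 VT0.
have radius i : exists d : R, 0 < d /\ forall z, tabs R z < d -> V (t (unit_vector i) z).
  have [_ t_cont] := t_cont_r (unit_vector i).
  have [|d [d_pos d_V]] := t_cont V V_open 0; first by split => //; rewrite /preimage /= t_x0.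
  by exists d; split => // z z_lt; have [] := d_V z; rewrite ?subr0.
have [d d_ok] := choice radius.
have [||M M_ok] := @exists_common_bound N
    (fun i m => forall a : int, `|a%:~R : R| * d i <= 2^-1 -> `|a| <= m%:Z).
- by move=> i m m' le_m a_m a /a_m /le_trans; apply; rewrite lez_nat.
- move=> i _; have [d_pos _] := d_ok i; have [m m_gt] := exists_nat_gt (2^-1 / d i).
  exists m => a a_le; rewrite -(ler_int R) intr_norm; apply: ltW; apply: le_lt_trans m_gt.
  by rewrite ler_pdivlMr.
have [qs [qs_hom qs_all]] := bounded_support_finite N M.
exists qs; split => // xi k xi_char k_hom xi_k xi_V; apply: qs_all => //.
- move=> x x0; apply: (int_eq0_of_bounded_multiples del_pos) => m.
  apply: norm_int_le_of_mulz_small del_pos _ => z z_lt.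
  rewrite -mulrzz -(additiveMz k_hom) -xi_k; apply/xi_V/UV.
    by apply: N_UZ => i i_lt; rewrite fctMz x0 // mul0rz.
  by apply: del_VT; rewrite subr0.
- move=> i i_lt; apply: (M_ok i i_lt); have [d_pos d_V] := d_ok i.
  by apply: norm_int_le_of_mulz_small d_pos _ => z z_lt; rewrite -xi_k; apply/xi_V/d_V.
Qed.

(* If [chi] is close to [chi0] at the finitely many coefficient homomorphisms,
   the image of [chi0 - chi] lies in every quasi-convex set, hence in [V]. *)
Lemma dual_to_tensor_cont : is_cont D H dual_to_tensor.
Proof.
move=> W W_open; apply: compact_open_of_pointwise; split=> [chi []//|chi0 [chi0_dual W0]].
case: H_Q => [[_ _ H_subcont] _ H_lqc].
have W0' : W (dual_to_tensor chi0 - 0) by rewrite subr0.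
have [U [V [_ V_open U0 V0 UV]]] := H_subcont (dual_to_tensor chi0) 0 W
  (dual_to_tensor_hom.1 _ chi0_dual) (subgroup0 subH) W_open W0'.
have [A [[_ A_qc] A_V [V' [V'_open V'0 V'_A]]]] := H_lqc V V_open V0.
have [qs [qs_hom qs_polar]] := polar_coeffs_finite V'_open V'0.
exists [seq (q, tball (chi0 q) 4^-1) | q <- qs]; split.
- by move=> pp /List.in_map_iff [q [<- q_in]]; split; [exact: qs_hom | exact: tball_open].
- by split=> // pp /List.in_map_iff [q [<- _]]; apply: tball_center; lra.
move=> chi [chi_dual chi_near]; split => //.
have diff_dual := subgroupB (dual_subgroup R) chi0_dual chi_dual.
pose y := dual_to_tensor (chi0 - chi).
have Ay : A y.
  apply: contrapT => nAy.
  have [xi [xi_char xi_A]] := A_qc y (dual_to_tensor_hom.1 _ diff_dual) nAy.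
  have [k k_hom xi_k] := character_tensor_coeffs xi_char.
  have k_in := qs_polar xi k xi_char k_hom xi_k (fun y V'y => xi_A y (V'_A y V'y)).
  have := chi_near _ (List.in_map (fun q => (q, tball (chi0 q) 4^-1)) _ _ k_in).
  rewrite /y (character_dual_to_tensor xi_char xi_k k_hom diff_dual) /tball /= tabsB.
  by change (tabs R (chi0 k - chi k) < 4^-1 -> 4^-1 < tabs R (chi0 k - chi k) -> False); lra.
have f_chi : dual_to_tensor chi = dual_to_tensor chi0 - y.
  by rewrite /y (homB (dual_subgroup R) dual_to_tensor_hom) // opprB addrC subrK.
by rewrite /preimage /= f_chi; apply: UV => //; apply: A_V.
Qed.

End TensorProduct.

Theorem theoremA (R : realType) (H : tgrp)
    (t : tg_V ZN -> tg_V (TT R) -> tg_V H) :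
  is_Q_tensor R ZN (TT R) H t -> top_iso (dual R HomZN) H.
Proof.
move=> [H_Q t_bihom H_univ]; have [[_ H_top _] _ _] := H_Q.
have [g [g_cont g_t _]] := H_univ _ _ (dual_in_Q R) (pure_tensor_bihom R).
have f_cont : cont_hom (dual R HomZN) H (dual_to_tensor t).
  by split; [apply: dual_to_tensor_hom | apply: dual_to_tensor_cont].
exists (dual_to_tensor t), g; split => //.
- move=> _ /dual_tensor_char [s ->].
  rewrite (dual_to_tensorE H_Q t_bihom) (hom_tensor_sum H_Q t_bihom s g_cont.1).
  by under eq_bigr do rewrite g_t //; apply: sum_pure_tensor.
- move=> y Hy; have [f' [_ _ f'_unique]] := H_univ H t H_Q t_bihom.
  have fg_t x z : tg_S ZN x -> tg_S (TT R) z -> (dual_to_tensor t \o g) (t x z) = t x z.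
    by move=> _ _ /=; rewrite g_t // (dual_to_tensor_pure H_Q t_bihom).
  have fg_y := f'_unique _ (cont_hom_comp g_cont f_cont) fg_t y Hy.
  have id_y := f'_unique _ (cont_hom_id H_top) (fun x z _ _ => erefl) y Hy.
  by rewrite /= in fg_y; rewrite fg_y -id_y.
Qed.
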